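(* Let $J^P_{k,n}$ be the number of maximal configurations resistant to predators of length $n$ with exactly $k$ occupied lots (the empty configuration of length $0$ being counted once). Then, as formal power series, $$\sum_{n\ge 0}\sum_{k\ge 0} J^P_{k,n}x^ky^n = \frac{1 + xy - (x - x^2)y^2 - x^2y^3}{1 - xy^2 - x^2y^3}.$$
   Context: A configuration of length $n\ge 0$ is a binary string $c_1c_2\cdots c_n$; $c_k=1$ means lot $k$ is occupied by a house, $c_k=0$ that it is empty. A house at position $k$ is blocked if $2\le k\le n-1$ and $c_{k-1}=c_{k+1}=1$ (lots beyond the ends never obstruct sunlight). A configuration is permissible if no house is blocked; maximal if it is permissible and, for every $k$ with $c_k=0$, setting $c_k=1$ yields a non-permissible string. A maximal configuration is resistant to predators if, for every $k$ with $c_k=0$, setting $c_k=1$ makes the new house at position $k$ blocked. *)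

From mathcomp Require Import all_boot all_order all_algebra.
Set Implicit Arguments. Unset Strict Implicit. Unset Printing Implicit Defensive.
Import GRing.Theory Num.Theory.

(* A configuration of length n is a bit sequence c; lot k (1-based in the paper)
   is index k-1 here (0-based).  c_i = true means lot i is occupied. *)

Definition lot (c : seq bool) (i : nat) : bool := nth false c i.

Definition blocked (c : seq bool) (i : nat) : bool :=
  [&& 0 < i, i.+1 < size c, lot c i.-1 & lot c i.+1].

Definition permissible (c : seq bool) : bool :=
  all (fun i => lot c i ==> ~~ blocked c i) (iota 0 (size c)).

Definition occupy (c : seq bool) (i : nat) : seq bool := set_nth false c i true.

Definition maximal (c : seq bool) : bool :=
  permissible c &&
  all (fun i => ~~ lot c i ==> ~~ permissible (occupy c i)) (iota 0 (size c)).

Definition resistant (c : seq bool) : bool :=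
  maximal c &&
  all (fun i => ~~ lot c i ==> blocked (occupy c i) i) (iota 0 (size c)).

Definition JP (k n : nat) : nat :=
  #|[set c : n.-tuple bool | resistant c & count id c == k]|.

(* Formal power series in x, y with integer coefficients, represented by
   their coefficient function: f k n = coefficient of x^k y^n. *)
Definition series := nat -> nat -> int.

Definition series_mul (f g : series) : series :=
  fun k n => (\sum_(i < k.+1) \sum_(j < n.+1) f i j * g (k - i)%N (n - j)%N)%R.

Definition JP_series : series := fun k n => Posz (JP k n).

Definition numer : series := fun k n =>
  match k, n with
  | 0, 0 => 1%R
  | 1, 1 => 1%R
  | 1, 2 => (-1)%R
  | 2, 2 => 1%R
  | 2, 3 => (-1)%R
  | _, _ => 0%R
  end.

(* Denominator 1 - x y^2 - x^2 y^3 (invertible, constant term 1). *)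
Definition denom : series := fun k n =>
  match k, n with
  | 0, 0 => 1%R
  | 1, 2 => (-1)%R
  | 2, 3 => (-1)%R
  | _, _ => 0%R
  end.

From mathcomp Require Import all_boot all_order all_algebra zify.
From Stdlib Require Import FunctionalExtensionality.
Set Implicit Arguments. Unset Strict Implicit. Unset Printing Implicit Defensive.
Import GRing.Theory Num.Theory.

(* A configuration is resistant exactly when every lot is the NAND of its two
   neighbours, lots beyond the ends counting as empty: an occupied lot must not
   be blocked, an empty lot must become blocked once occupied, and the latter
   already forces maximality.  So a nonempty resistant configuration starts
   with 1 and never contains 111, and cutting off its prefix 10 or 110 leaves a
   nonempty resistant configuration.  Hence
   J(k, n) = J(k-1, n-2) + J(k-2, n-3) for n >= 4, which together with the
   values for n <= 3 says coefficientwise that F (1 - x y^2 - x^2 y^3) is the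
   numerator. *)

Lemma blockedE c i : blocked c i = [&& 0 < i, lot c i.-1 & lot c i.+1].
Proof.
rewrite /blocked; case: (ltnP i.+1 (size c)) => [_|big]; first by case: (0 < i).
by rewrite [lot c i.+1]nth_default ?andbF.
Qed.

Lemma lot_occupy c i : lot (occupy c i) i.
Proof. by rewrite /lot nth_set_nth /= eqxx. Qed.

Lemma blocked_occupy c i : i < size c -> blocked (occupy c i) i = blocked c i.
Proof.
move=> ltic; rewrite !blockedE /lot /occupy !nth_set_nth /=.
by case: i ltic => [|i] //= _; rewrite ltn_eqF // gtn_eqF.
Qed.

Lemma resistant_lot c :
  resistant c = all (fun i => lot c i == ~~ blocked c i) (iota 0 (size c)).
Proof.
set resists := all (fun i => ~~ lot c i ==> blocked c i) (iota 0 (size c)).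
have blocked_if_empty i : i \in iota 0 (size c) ->
    (~~ lot c i ==> blocked (occupy c i) i) = (~~ lot c i ==> blocked c i).
  by rewrite mem_iota => /andP[_ ltic]; rewrite blocked_occupy.
have resists_maximal : resists ->
    all (fun i => ~~ lot c i ==> ~~ permissible (occupy c i)) (iota 0 (size c)).
  move=> /allP res; apply/allP => i ic; apply/implyP => empty.
  have ltic : i < size c by move: ic; rewrite mem_iota.
  apply/negP => /allP/(_ i); rewrite size_set_nth mem_iota leq_max leqnn.
  by rewrite lot_occupy blocked_occupy // (implyP (res i ic) empty) => /(_ isT).
have -> : all (fun i => lot c i == ~~ blocked c i) (iota 0 (size c)) =
    permissible c && resists.
  rewrite -all_predI; apply: eq_all => i /=.
  by case: (lot c i); case: (blocked c i).
rewrite /resistant /maximal (eq_in_all blocked_if_empty) -/resists.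
by case res: resists; rewrite ?andbF // (resists_maximal res) !andbT.
Qed.

Fixpoint nand_rule (l : bool) (c : seq bool) : bool :=
  if c is m :: c' then (m == ~~ (l && head false c')) && nand_rule m c' else true.

Lemma nand_ruleE l c : nand_rule l c =
  all (fun i => lot c i == ~~ (lot (l :: c) i && lot c i.+1)) (iota 0 (size c)).
Proof.
elim: c l => [|m c IHc] l //=; rewrite IHc (iotaDl 1 0) all_map -nth0.
by congr andb; apply: eq_all.
Qed.

Lemma resistant_nand c : resistant c = nand_rule false c.
Proof.
by rewrite resistant_lot nand_ruleE; apply: eq_all => -[|i]; rewrite blockedE.
Qed.

Lemma resistant_cons_false t : resistant (false :: t) = false.
Proof. by rewrite resistant_nand. Qed.

Lemma resistant_10 t : resistant [:: true, false & t] = (t != [::]) && resistant t.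
Proof. by rewrite !resistant_nand; case: t => [|[] t]. Qed.

Lemma resistant_110 t :
  resistant [:: true, true, false & t] = (t != [::]) && resistant t.
Proof. by rewrite !resistant_nand; case: t => [|[] t]. Qed.

Fixpoint bitseqs n : seq (seq bool) :=
  if n is n'.+1 then map (cons true) (bitseqs n') ++ map (cons false) (bitseqs n')
  else [:: [::]].

Lemma cons_inj (T : Type) (x : T) : injective (cons x).
Proof. by move=> s t []. Qed.

Lemma mem_map_cons (T : eqType) (x y : T) s (X : seq (seq T)) :
  (y :: s \in map (cons x) X) = (y == x) && (s \in X).
Proof.
by apply/mapP/andP => [[t Xt [-> ->]]|[/eqP -> Xs]]; [rewrite eqxx | exists s].
Qed.

Lemma mem_bitseqs n s : (s \in bitseqs n) = (size s == n).
Proof.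
elim: n s => [|n IHn] [|b s] //=; rewrite mem_cat.
  by apply/norP; split; apply/mapP => -[].
by rewrite !mem_map_cons IHn eqSS; case: b; rewrite ?orbF.
Qed.

Lemma bitseqs_uniq n : uniq (bitseqs n).
Proof.
elim: n => //= n IHn; rewrite cat_uniq !(map_inj_uniq (@cons_inj _ _)) IHn andbT.
by apply/hasPn => _ /mapP[s _ ->]; rewrite mem_map_cons.
Qed.

Lemma count_bitseqsS (P : pred (seq bool)) n : count P (bitseqs n.+1) =
  count (P \o cons true) (bitseqs n) + count (P \o cons false) (bitseqs n).
Proof. by rewrite count_cat !count_map. Qed.

Lemma card_tuple_count n (P : pred (seq bool)) :
  #|[set c : n.-tuple bool | P c]| = count P (bitseqs n).
Proof.
rewrite cardsE cardE /enum_mem size_filter -enumT -(count_map val).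
apply/permP/uniq_perm; rewrite ?bitseqs_uniq ?(map_inj_uniq val_inj) ?enum_uniq //.
move=> s; rewrite mem_bitseqs.
apply/mapP/eqP => [[c _ ->]|sn]; first exact: size_tuple.
by exists (Tuple (introT eqP sn)); rewrite ?mem_enum.
Qed.

Lemma JP_count k n :
  JP k n = count (fun c => resistant c && (count id c == k)) (bitseqs n).
Proof. exact: card_tuple_count. Qed.

Lemma JP_len0 k : JP k 0 = (k == 0).
Proof. by rewrite JP_count; case: k. Qed.
Lemma JP_len1 k : JP k 1 = (k == 1).
Proof. by rewrite JP_count; case: k => [|[]]. Qed.
Lemma JP_len2 k : JP k 2 = (k == 2).
Proof. by rewrite JP_count; case: k => [|[|[]]]. Qed.
Lemma JP_len3 k : JP k 3 = (k == 2).
Proof. by rewrite JP_count; case: k => [|[|[]]]. Qed.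

Lemma count_succ_eq (T : Type) (P : pred T) (w : T -> nat) k A :
  count (fun t => P t && ((w t).+1 == k)) A =
  if k is k'.+1 then count (fun t => P t && (w t == k')) A else 0.
Proof.
case: k => [|k] //; rewrite (eq_count (a2 := pred0)) ?count_pred0 // => t.
by rewrite andbF.
Qed.

Lemma count_resistant_false (Q : pred (seq bool)) A :
  count (fun c => resistant (false :: c) && Q c) A = 0.
Proof.
rewrite (eq_count (a2 := pred0)) ?count_pred0 // => c.
by rewrite resistant_cons_false.
Qed.

Lemma JP_rec k m : JP k m.+4 =
  (if k is k'.+1 then JP k' m.+2 else 0) + (if k is k'.+2 then JP k' m.+1 else 0).
Proof.
have nonempty n (t : seq bool) : t \in bitseqs n.+1 -> t != [::].
  by rewrite mem_bitseqs; case: t.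
rewrite JP_count count_bitseqsS count_resistant_false addn0.
rewrite count_bitseqsS addnC.
congr (_ + _).
  rewrite (eq_in_count (a2 := fun t => resistant t && ((count id t).+1 == k))).
    by rewrite count_succ_eq; case: k => // k; rewrite JP_count.
  by move=> t /nonempty t_nil /=; rewrite resistant_10 t_nil.
(* a configuration starting with 111 evaluates to non-resistant *)
rewrite count_bitseqsS (eq_count (a2 := pred0)) // count_pred0 add0n.
rewrite (eq_in_count (a2 := fun t => resistant t && ((count id t).+2 == k))).
  rewrite (count_succ_eq _ (fun t => (count id t).+1)).
  by case: k => // k; rewrite count_succ_eq; case: k => // k; rewrite JP_count.
by move=> t /nonempty t_nil /=; rewrite resistant_110 t_nil.
Qed.

Local Open Scope ring_scope.

Lemma sum_ord_delta (V : nmodType) (G : nat -> V) m a :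
  \sum_(i < m.+1) G i *+ (m - i == a)%N = if (a <= m)%N then G (m - a)%N else 0.
Proof.
under eq_bigr do rewrite mulrb; rewrite -big_mkcond /=.
rewrite (eq_bigl (fun i : 'I_m.+1 => (a <= m) && (i == m - a :> nat))%N).
  by rewrite (big_ord1_cond_eq _ G (fun=> a <= m)%N) ltnS leq_subr.
by move=> i; have := ltn_ord i; lia.
Qed.

Definition monomial (a b : nat) : series := fun k n => ((k == a) && (n == b))%:R.

Lemma series_mul_monomial f a b k n : series_mul f (monomial a b) k n =
  if ((a <= k) && (b <= n))%N then f (k - a)%N (n - b)%N else 0.
Proof.
rewrite /series_mul /monomial if_and.
under eq_bigr => i _.
  under eq_bigr => j _ do rewrite mulr_natr -mulnb mulrnA.
  rewrite (sum_ord_delta (fun j => f i j *+ (k - i == a)%N)).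
  over.
case: (b <= n)%N; last by rewrite big1 ?if_same.
exact: (sum_ord_delta (fun i => f i (n - b)%N)).
Qed.

Lemma series_mulBr f g h k n :
  series_mul f (fun a b => g a b - h a b) k n =
  series_mul f g k n - series_mul f h k n.
Proof.
rewrite /series_mul -sumrB; apply: eq_bigr => i _.
by rewrite -sumrB; apply: eq_bigr => j _; rewrite mulrBr.
Qed.

Lemma denomE :
  denom = fun a b => monomial 0 0 a b - monomial 1 2 a b - monomial 2 3 a b.
Proof.
apply: functional_extensionality => a; apply: functional_extensionality => b.
by case: a => [|[|[|a]]]; case: b => [|[|[|[|b]]]].
Qed.

Lemma series_mul_denom f k n : series_mul f denom k n =
  f k n - (if ((1 <= k) && (2 <= n))%N then f (k - 1)%N (n - 2)%N else 0)
        - (if ((2 <= k) && (3 <= n))%N then f (k - 2)%N (n - 3)%N else 0).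
Proof. by rewrite denomE !series_mulBr !series_mul_monomial !subn0. Qed.

Theorem mainTheorem4 : series_mul JP_series denom = numer.
Proof.
apply: functional_extensionality => k; apply: functional_extensionality => n.
rewrite series_mul_denom /JP_series.
case: n => [|[|[|[|m]]]]; case: k => [|[|[|k]]];
  rewrite ?JP_len0 ?JP_len1 ?JP_len2 ?JP_len3 ?JP_rec /= ?subSS ?subn0 //; lia.
Qed.
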